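(* Let $q\in\,]0,1[$, $\omega\ge 0$, let $I$ be an interval containing $\omega_0:=\omega/(1-q)$, and let $f:I\to\mathbb{R}$ be continuous at $\omega_0$. For $x\in I$ define $F(x):=\int_{\omega_0}^{x}f(t)\,\tilde d_{q,\omega}t$. Then $F$ is continuous at $\omega_0$, and $\tilde D_{q,\omega}[F](x)$ exists for every $x\in I^{q,\omega}$ with $\tilde D_{q,\omega}[F](x)=f(x)$. Conversely, $$\int_a^b\tilde D_{q,\omega}[f](t)\,\tilde d_{q,\omega}t=f(b)-f(a)$$ for all $a,b\in I$.
   Context: $\sigma(t):=qt+\omega$, $\sigma^{-1}(t):=q^{-1}(t-\omega)$, $\sigma^k$ is the $k$-fold composition of $\sigma$, $f^{\sigma^k}:=f\circ\sigma^k$, and $I^{q,\omega}:=\{qt+\omega:t\in I\}$. Hahn symmetric derivative: for $t\in I^{q,\omega}\setminus\{\omega_0\}$, $\tilde D_{q,\omega}[f](t):=\frac{f(\sigma(t))-f(\sigma^{-1}(t))}{\sigma(t)-\sigma^{-1}(t)}$, and $\tilde D_{q,\omega}[f](\omega_0):=f'(\omega_0)$ (classical derivative) provided $f$ is differentiable at $\omega_0$. Hahn symmetric integral: for $x\in I$, $$\int_{\omega_0}^x f(t)\,\tilde d_{q,\omega}t:=\bigl(\sigma^{-1}(x)-\sigma(x)\bigr)\sum_{n=0}^{\infty}q^{2n+1}f(\sigma^{2n+1}(x)),$$ and for $a,b\in I$, $\int_a^b f(t)\,\tilde d_{q,\omega}t:=\int_{\omega_0}^b f(t)\,\tilde d_{q,\omega}t-\int_{\omega_0}^a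 f(t)\,\tilde d_{q,\omega}t$, provided the series converge at $x=a$ and $x=b$. *)

From HB Require Import structures.
From mathcomp Require Import all_boot all_order all_algebra.
From mathcomp Require Import all_classical all_reals all_analysis.
Set Implicit Arguments. Unset Strict Implicit. Unset Printing Implicit Defensive.
Import Order.TTheory GRing.Theory Num.Theory.
Import numFieldNormedType.Exports.
Local Open Scope classical_set_scope.
Local Open Scope ring_scope.

Section Hahn.
Variable R : realType.

Definition hsigma (q w t : R) : R := q * t + w.
Definition hsigma_inv (q w t : R) : R := q^-1 * (t - w).
Definition hsigma_iter (q w : R) (k : nat) (t : R) : R := iter k (hsigma q w) t.
Definition homega0 (q w : R) : R := w / (1 - q).
Definition hImage (q w : R) (I : set R) : set R := hsigma q w @` I.

Definition hint_term (q w : R) (f : R -> R) (x : R) (n : nat) : R :=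
  q ^+ (2 * n + 1) * f (hsigma_iter q w (2 * n + 1) x).

Definition hint0_exists (q w : R) (f : R -> R) (x : R) : Prop :=
  cvgn (series (hint_term q w f x)).

(* int_{omega_0}^x f(t) d~_{q,omega} t
   = (sigma^{-1}(x) - sigma(x)) * sum_{n>=0} q^{2n+1} f(sigma^{2n+1}(x))
   (meaningful when hint0_exists holds) *)
Definition hint0 (q w : R) (f : R -> R) (x : R) : R :=
  (hsigma_inv q w x - hsigma q w x) * limn (series (hint_term q w f x)).

Definition hint (q w : R) (f : R -> R) (a b : R) : R :=
  hint0 q w f b - hint0 q w f a.

Definition hsymq (q w : R) (f : R -> R) (t : R) : R :=
  (f (hsigma q w t) - f (hsigma_inv q w t)) /
  (hsigma q w t - hsigma_inv q w t).

Definition hdq0 (q w : R) (f : R -> R) (x : R) : R :=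
  (f x - f (homega0 q w)) / (x - homega0 q w).

Definition hat0 (q w : R) (I : set R) :=
  within [set x | I x /\ x != homega0 q w] (nbhs (homega0 q w)).

(* "D~_{q,omega}[f](t) exists and equals l": for t <> omega_0 this is the
   symmetric difference quotient; at omega_0 it is the classical derivative
   of f (on I) at omega_0. *)
Definition is_hsymD (q w : R) (I : set R) (f : R -> R) (t l : R) : Prop :=
  if t == homega0 q w then hdq0 q w f x @[x --> hat0 q w I] --> l
  else hsymq q w f t = l.

(* D~_{q,omega}[f] as a total function (at omega_0: the limit of the
   classical difference quotient, an arbitrary value if it does not exist) *)
Definition hsymD (q w : R) (I : set R) (f : R -> R) (t : R) : R :=
  if t == homega0 q w then lim (hdq0 q w f x @[x --> hat0 q w I])
  else hsymq q w f t.

End Hahn.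

From HB Require Import structures.
From mathcomp Require Import all_boot all_order all_algebra.
From mathcomp Require Import all_classical all_reals all_analysis.
From mathcomp Require Import ring lra.
Import Order.TTheory GRing.Theory Num.Theory.
Import numFieldNormedType.Exports.
Local Open Scope classical_set_scope.
Local Open Scope ring_scope.

(* sigma is the contraction of ratio q about its fixed point omega_0, so
   sigma^k x = omega_0 + q^k (x - omega_0) and sigma^{-1} x - sigma x =
   (q^-1 - q)(x - omega_0).  Since sum_n q^{2n+1} = q / (1 - q^2) is the
   reciprocal of q^-1 - q, the integral F(x) differs from (x - omega_0) f(omega_0)
   by at most |x - omega_0| sup_k |f(sigma^k x) - f(omega_0)|, which continuity
   of f at omega_0 makes small: this gives the existence of F, its continuity at
   omega_0 and F'(omega_0) = f(omega_0).  Away from omega_0, dropping the first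
   term of the series gives F(y) - F(sigma^2 y) = (y - sigma^2 y) f(sigma y),
   which is the symmetric derivative identity at sigma y.  Conversely, the series
   defining the integral of D~[f] telescopes along the even iterates
   sigma^{2n} x, whose values f(sigma^{2n} x) tend to f(omega_0). *)

Lemma cvg_series_norm_le {R : realType} {u v : R ^nat} :
  (forall n, `|u n| <= v n) -> cvgn (series v) ->
  cvgn (series u) /\ `|limn (series u)| <= limn (series v).
Proof.
move=> uv cv.
have cn : cvgn [normed series u].
  by apply: (series_le_cvg _ _ uv cv) => n //; exact: le_trans (uv n).
split; first exact: normed_cvg.
exact: le_trans (lim_series_norm cn) (lim_series_le _ _ _).
Qed.

Lemma cvg_series_odd_powers {R : archiRealFieldType} (q : R) : 0 < q < 1 ->
  series (fun n : nat => q ^+ (2 * n + 1)) @ \oo --> q / (1 - q ^+ 2).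
Proof.
move=> /andP[q_gt0 q_lt1].
have -> : (fun n : nat => q ^+ (2 * n + 1)) = geometric q (q ^+ 2).
  by apply/funext => n /=; rewrite addn1 exprS exprM.
by apply: cvg_geometric_series; rewrite ger0_norm ?exprn_ge0 ?ltW //; nra.
Qed.

Lemma cvg_series_tail {K : numFieldType} {V : normedModType K} (u : V ^nat)
    (l : V) :
  series u @ \oo --> l -> series (fun n => u n.+1) @ \oo --> l - u 0%N.
Proof.
move=> ul.
have -> : series (fun n => u n.+1) = (fun n => series u n.+1 - u 0%N).
  by apply/funext => n; rewrite !seriesEord /= big_ord_recl addrC addKr.
by apply: cvgB (cvg_cst _); rewrite (cvg_shiftS (series u)).
Qed.

Section HahnSeries.
Context {R : realType} {q w : R}.
Hypothesis q01 : 0 < q < 1.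
Local Notation w0 := (homega0 q w).
Implicit Types (g : R -> R) (I : set R).

Let q_gt0 : 0 < q. Proof. by case/andP: q01. Qed.
Let q_lt1 : q < 1. Proof. by case/andP: q01. Qed.
Let q_neq0 : q != 0. Proof. by rewrite gt_eqF. Qed.
Let sqrq_lt1 : q ^+ 2 < 1.
Proof. by rewrite expr2; case/andP: q01 => ? ?; nra. Qed.

Lemma hsigmaE t : hsigma q w t = q * (t - w0) + w0.
Proof. by rewrite /hsigma /homega0; field; rewrite subr_eq0 eq_sym lt_eqF. Qed.

Lemma hsigma_invE t : hsigma_inv q w t = (t - w0) / q + w0.
Proof.
by rewrite /hsigma_inv /homega0; field; rewrite q_neq0 subr_eq0 eq_sym lt_eqF.
Qed.

Lemma hsigmaK : cancel (hsigma q w) (hsigma_inv q w).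
Proof. by move=> t; rewrite /hsigma_inv /hsigma addrK mulKf. Qed.

Lemma hsigma_iterE k t : hsigma_iter q w k t = q ^+ k * (t - w0) + w0.
Proof.
elim: k => [|k IHk]; first by rewrite /hsigma_iter expr0 mul1r subrK.
rewrite /hsigma_iter iterS -/(hsigma_iter q w k t) hsigmaE IHk.
by rewrite addrK exprS mulrA.
Qed.

Lemma hsigma_iter_omega0 k : hsigma_iter q w k w0 = w0.
Proof. by rewrite hsigma_iterE subrr mulr0 add0r. Qed.

Lemma dist_hsigma_iter k t : `|hsigma_iter q w k t - w0| <= `|t - w0|.
Proof.
rewrite hsigma_iterE addrK normrM (ger0_norm (exprn_ge0 _ (ltW q_gt0))).
by rewrite ler_piMl // exprn_ile1 // ltW.
Qed.

Lemma hsigma_iter_interval I k t :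
  is_interval I -> I w0 -> I t -> I (hsigma_iter q w k t).
Proof.
move=> I_itv I_w0 It; rewrite hsigma_iterE.
have qk_ge0 : 0 <= q ^+ k by rewrite exprn_ge0 // ltW.
have qk_le1 : q ^+ k <= 1 by rewrite exprn_ile1 // ltW.
have [tw|wt] := leP t w0.
- by apply: (I_itv t w0) => //; apply/andP; split; nra.
- by apply: (I_itv w0 t) => //; apply/andP; split; nra.
Qed.

Lemma cvg_hsigma_iter t : hsigma_iter q w k t @[k --> \oo] --> w0.
Proof.
have -> : (fun k => hsigma_iter q w k t) = (fun k => q ^+ k * (t - w0) + w0).
  by apply/funext => k; exact: hsigma_iterE.
have qk : q ^+ k @[k --> \oo] --> 0 by apply: cvg_expr; rewrite gtr0_norm.
rewrite -[X in _ --> X]add0r -(mul0r (t - w0)).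
by apply: cvgD; [exact: cvgMr_tmp | exact: cvg_cst].
Qed.

Lemma hint0E g x :
  hint0 q w g x = (1 - q ^+ 2) / q * (x - w0) * limn (series (hint_term q w g x)).
Proof. by rewrite /hint0 hsigmaE hsigma_invE; field. Qed.

Lemma hint0_omega0 g : hint0 q w g w0 = 0.
Proof. by rewrite hint0E subrr mulr0 mul0r. Qed.

Lemma hint_series_approx {g x} {M : R} :
  (forall k, `|g (hsigma_iter q w k x) - g w0| <= M) ->
  hint0_exists q w g x /\
  `|limn (series (hint_term q w g x)) - g w0 * (q / (1 - q ^+ 2))|
    <= M * (q / (1 - q ^+ 2)).
Proof.
move=> gM; rewrite /hint0_exists; set Q := q / (1 - q ^+ 2).
pose odd_pow n := q ^+ (2 * n + 1).
pose dev n := odd_pow n * (g (hsigma_iter q w (2 * n + 1) x) - g w0).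
have odd_powQ : series odd_pow @ \oo --> Q := cvg_series_odd_powers q q01.
have odd_pow_cvg : cvgn (series odd_pow) by apply/cvg_ex; exists Q.
have dev_le n : `|dev n| <= (M *: odd_pow) n.
  have odd_pow_ge0 : 0 <= odd_pow n by rewrite exprn_ge0 // ltW.
  by rewrite normrM ger0_norm // mulrC; exact: ler_wpM2r (gM _).
have [dev_cvg dev_lim] :=
  cvg_series_norm_le dev_le (is_cvg_seriesZ (k := M) odd_pow_cvg).
have -> : hint_term q w g x = g w0 *: odd_pow + dev.
  apply/funext => n.
  have -> : (g w0 *: odd_pow + dev) n = g w0 * odd_pow n + dev n by [].
  by rewrite /hint_term /dev /odd_pow; ring.
have gQ_cvg := is_cvg_seriesZ (k := g w0) odd_pow_cvg.
split; first exact: is_cvg_seriesD.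
rewrite lim_seriesD // lim_seriesZ // (cvg_lim _ odd_powQ) // addrC addKr.
by rewrite lim_seriesZ // (cvg_lim _ odd_powQ) in dev_lim.
Qed.

Lemma hint0_linear_approx {g x} {M : R} :
  (forall k, `|g (hsigma_iter q w k x) - g w0| <= M) ->
  hint0_exists q w g x /\ `|hint0 q w g x - (x - w0) * g w0| <= M * `|x - w0|.
Proof.
move=> /hint_series_approx[g_ex]; set S : R := limn _; set Q := q / _ => SQ.
split=> //.
have K_gt0 : 0 < (1 - q ^+ 2) / q by rewrite divr_gt0 // subr_gt0.
have Q_neq0 : 1 - q ^+ 2 != 0 by rewrite subr_eq0 eq_sym lt_eqF.
have -> : hint0 q w g x - (x - w0) * g w0 =
    (1 - q ^+ 2) / q * (x - w0) * (S - g w0 * Q).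
  by rewrite hint0E -/S /Q; field; rewrite q_neq0 Q_neq0.
have -> : M * `|x - w0| = (1 - q ^+ 2) / q * (`|x - w0| * (M * Q)).
  by rewrite /Q; field; rewrite q_neq0 Q_neq0.
rewrite normrM normrM (gtr0_norm K_gt0) -[leLHS]mulrA ler_pM2l //.
by apply: ler_wpM2l.
Qed.

Lemma hint_term_hsigma2 g y n :
  hint_term q w g (hsigma q w (hsigma q w y)) n = q ^- 2 * hint_term q w g y n.+1.
Proof.
rewrite /hint_term /hsigma_iter -!iterSr.
have -> : (2 * n.+1 + 1 = (2 * n + 1).+2)%N by rewrite mulnS -addnA add2n.
by rewrite !exprS; field.
Qed.

Lemma hint0_hsigma2 g y : hint0_exists q w g y ->
  hint0 q w g y - hint0 q w g (hsigma q w (hsigma q w y)) =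
  (y - hsigma q w (hsigma q w y)) * g (hsigma q w y).
Proof.
move=> g_ex; set S := limn (series (hint_term q w g y)).
have S2 : limn (series (hint_term q w g (hsigma q w (hsigma q w y)))) =
    q ^- 2 * (S - q * g (hsigma q w y)).
  apply: cvg_lim => //.
  have -> : hint_term q w g (hsigma q w (hsigma q w y)) =
      q ^- 2 *: (fun n => hint_term q w g y n.+1).
    by apply/funext => n; exact: hint_term_hsigma2.
  rewrite seriesZ; apply: cvgZl_tmp.
  have -> : q * g (hsigma q w y) = hint_term q w g y 0%N.
    by rewrite /hint_term expr1.
  exact: cvg_series_tail.
by rewrite !hint0E S2 -/S !hsigmaE; field.
Qed.

Lemma hsymq_hint0 g y : hint0_exists q w g y -> hsigma q w y != w0 ->
  hsymq q w (hint0 q w g) (hsigma q w y) = g (hsigma q w y).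
Proof.
move=> g_ex y_w0.
have y_w0' : y - w0 != 0.
  by apply: contraNneq y_w0; rewrite hsigmaE => ->; rewrite mulr0 add0r.
have gap : hsigma q w (hsigma q w y) - y = (q ^+ 2 - 1) * (y - w0).
  by rewrite !hsigmaE; ring.
have gap_neq0 : hsigma q w (hsigma q w y) - y != 0.
  by rewrite gap mulf_neq0 // subr_eq0 lt_eqF.
rewrite /hsymq hsigmaK; apply/(mulIf gap_neq0); rewrite divfK //.
have -> : hint0 q w g (hsigma q w (hsigma q w y)) - hint0 q w g y =
    - (hint0 q w g y - hint0 q w g (hsigma q w (hsigma q w y))) by rewrite opprB.
by rewrite hint0_hsigma2 // -mulNr opprB mulrC.
Qed.

Lemma hint_term_hsymD I g x n : x != w0 ->
  hint_term q w (hsymD q w I g) x n =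
  q / ((q ^+ 2 - 1) * (x - w0)) *
  (g (hsigma_iter q w (2 * n.+1) x) - g (hsigma_iter q w (2 * n) x)).
Proof.
move=> x_w0; rewrite /hint_term /hsymD.
set t := hsigma_iter q w (2 * n + 1) x.
have x_w0' : x - w0 != 0 by rewrite subr_eq0.
have qn_neq0 : q ^+ (2 * n) != 0 by rewrite expf_neq0.
have t_w0 : t != w0.
  by rewrite -subr_eq0 /t hsigma_iterE addrK mulf_neq0 // expf_neq0.
have sigma_t : hsigma q w t = hsigma_iter q w (2 * n.+1) x.
  by rewrite /t /hsigma_iter -iterS mulnS add2n addn1.
have sigma_inv_t : hsigma_inv q w t = hsigma_iter q w (2 * n) x.
  by rewrite /t /hsigma_iter addn1 iterS hsigmaK.
have gap : hsigma_iter q w (2 * n.+1) x - hsigma_iter q w (2 * n) x =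
    q ^+ (2 * n) * (q ^+ 2 - 1) * (x - w0).
  by rewrite !hsigma_iterE mulnS exprD; ring.
rewrite (negbTE t_w0) /hsymq sigma_t sigma_inv_t gap addn1 exprS.
by field; rewrite qn_neq0 x_w0' subr_eq0 lt_eqF.
Qed.

Lemma hint0_hsymD I {g x} :
  g (hsigma_iter q w k x) @[k --> \oo] --> g w0 ->
  hint0_exists q w (hsymD q w I g) x /\
  hint0 q w (hsymD q w I g) x = g x - g w0.
Proof.
move=> g_cvg; have [->|x_w0] := eqVneq x w0.
  split; last by rewrite hint0_omega0 subrr.
  rewrite /hint0_exists.
  have -> : hint_term q w (hsymD q w I g) w0 =
      hsymD q w I g w0 *: (fun n => q ^+ (2 * n + 1)).
    by apply/funext => n; rewrite /hint_term hsigma_iter_omega0 mulrC.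
  apply/is_cvg_seriesZ/cvg_ex; exists (q / (1 - q ^+ 2)).
  exact: cvg_series_odd_powers.
pose v n := g (hsigma_iter q w (2 * n) x).
set c := q / ((q ^+ 2 - 1) * (x - w0)).
have v_cvg : v @ \oo --> g w0.
  apply/cvgrPdist_lt => e e0; have [N _ gN] := cvgr_dist_lt _ _ g_cvg _ e0.
  by exists N => // n /= nN; apply: gN; rewrite /= (leq_trans nN) // leq_pmull.
have term : hint_term q w (hsymD q w I g) x = c *: telescope v.
  by apply/funext => n; rewrite hint_term_hsymD.
have series_lim :
    series (hint_term q w (hsymD q w I g) x) @ \oo --> c * (g w0 - g x).
  rewrite term seriesZ telescopeK; apply: cvgZl_tmp.
  exact: cvgB v_cvg (cvg_cst _).
split; first by apply/cvg_ex; exists (c * (g w0 - g x)).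
rewrite hint0E (cvg_lim _ series_lim) // /c.
by field; rewrite subr_eq0 x_w0 subr_eq0 lt_eqF.
Qed.

Section ContinuousAtOmega0.
Context {I : set R} {f : R -> R}.
Hypotheses (I_itv : is_interval I) (I_w0 : I w0).
Hypothesis f_cont : f @ within I (nbhs w0) --> f w0.

Lemma near_omega0_hsigma_iter {e : R} : 0 < e ->
  \forall x \near w0, I x -> forall k, `|f (hsigma_iter q w k x) - f w0| < e.
Proof.
move=> e_gt0; have := cvgr_dist_lt _ _ f_cont _ e_gt0.
move=> /(_ (within_filter _ _)); rewrite near_withinE => /nbhs_ballP[d d_gt0 fd].
apply/nbhs_ballP; exists d => // x xd Ix k.
rewrite distrC; apply: fd; last exact: hsigma_iter_interval.
rewrite /ball /= distrC; apply: le_lt_trans (dist_hsigma_iter k x) _.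
by rewrite distrC.
Qed.

Lemma cvg_fun_hsigma_iter x :
  I x -> f (hsigma_iter q w k x) @[k --> \oo] --> f w0.
Proof.
move=> Ix; apply/cvgrPdist_lt => e e_gt0.
have := cvgr_dist_lt _ _ f_cont _ e_gt0.
move=> /(_ (within_filter _ _)).
rewrite near_withinE => /(cvg_hsigma_iter x) f_near.
have {}f_near : \forall k \near \oo,
    I (hsigma_iter q w k x) -> `|f w0 - f (hsigma_iter q w k x)| < e := f_near.
near=> k; apply: (near f_near k) => //; exact: hsigma_iter_interval.
Unshelve. all: by end_near.
Qed.

Lemma hint0_exists_of_cont x : I x -> hint0_exists q w f x.
Proof.
move=> Ix.
have /cvg_seq_bounded/pinfty_ex_gt0[M _ fM] :
    cvgn (fun k => f (hsigma_iter q w k x) - f w0).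
  apply: is_cvgB; last exact: is_cvg_cst.
  by apply/cvg_ex; exists (f w0); exact: cvg_fun_hsigma_iter.
by have [] := hint0_linear_approx (fun k => fM k Logic.I).
Qed.

Lemma hint0_cvg_omega0 : hint0 q w f @ within I (nbhs w0) --> hint0 q w f w0.
Proof.
rewrite hint0_omega0; apply/cvgrPdist_lt => e e_gt0.
have /nbhs_ballP[d d_gt0 f_dev] := near_omega0_hsigma_iter ltr01.
have B_gt0 : 0 < `|f w0| + 1 by rewrite ltr_wpDl.
rewrite near_withinE; apply/nbhs_ballP.
exists (Num.min d (e / (`|f w0| + 1))) => [|x].
  by rewrite /= lt_min d_gt0 divr_gt0.
rewrite /ball /= lt_min => /andP[xd xe] Ix.
have [_ approx] := hint0_linear_approx (fun k => ltW (f_dev x xd Ix k)).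
have := ler_normD (hint0 q w f x - (x - w0) * f w0) ((x - w0) * f w0).
rewrite subrK (normrM (x - w0)) sub0r normrN.
rewrite distrC ltr_pdivlMr // in xe.
have := normr_ge0 (x - w0); have := normr_ge0 (f w0); nra.
Qed.

Lemma hdq0_hint0_cvg : hdq0 q w (hint0 q w f) x @[x --> hat0 q w I] --> f w0.
Proof.
apply/cvgrPdist_lt => e e_gt0.
have e2_gt0 : 0 < e / 2 by rewrite divr_gt0.
have /nbhs_ballP[d d_gt0 f_dev] := near_omega0_hsigma_iter e2_gt0.
rewrite /hat0 near_withinE; apply/nbhs_ballP; exists d => // x xd [Ix x_w0].
have [_ approx] := hint0_linear_approx (fun k => ltW (f_dev x xd Ix k)).
have x_w0' : x - w0 != 0 by rewrite subr_eq0.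
rewrite /hdq0 hint0_omega0 subr0.
have -> : f w0 - hint0 q w f x / (x - w0) =
    - (hint0 q w f x - (x - w0) * f w0) / (x - w0) by field.
rewrite normrM normrN normfV ltr_pdivrMr ?normr_gt0 //.
have := normr_gt0 (x - w0); rewrite x_w0'; nra.
Qed.

End ContinuousAtOmega0.

End HahnSeries.

Theorem theorem2p13 (R : realType) (q w : R) (I : set R) (f : R -> R) :
  0 < q < 1 -> 0 <= w ->
  is_interval I -> I (homega0 q w) ->
  f @ within I (nbhs (homega0 q w)) --> f (homega0 q w) ->
  (forall x, I x -> hint0_exists q w f x) /\
  (hint0 q w f @ within I (nbhs (homega0 q w)) --> hint0 q w f (homega0 q w)) /\
  (forall x, hImage q w I x -> is_hsymD q w I (hint0 q w f) x (f x)) /\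
  (forall a b, I a -> I b ->
     hint0_exists q w (hsymD q w I f) a /\ hint0_exists q w (hsymD q w I f) b /\
     hint q w (hsymD q w I f) a b = f b - f a).
Proof.
move=> q01 _ I_itv I_w0 f_cont.
have F_ex := hint0_exists_of_cont q01 I_itv I_w0 f_cont.
have f_iter_cvg := cvg_fun_hsigma_iter q01 I_itv I_w0 f_cont.
split; first exact: F_ex.
split; first exact: hint0_cvg_omega0.
split.
  move=> _ [y Iy <-]; rewrite /is_hsymD; case: ifPn => [/eqP ->|y_w0].
    exact: hdq0_hint0_cvg.
  exact: hsymq_hint0 (F_ex y Iy) y_w0.
move=> a b Ia Ib.
have [Da Fa] := hint0_hsymD q01 I (f_iter_cvg a Ia).
have [Db Fb] := hint0_hsymD q01 I (f_iter_cvg b Ib).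
by split=> //; split=> //; rewrite /hint Fa Fb opprB addrA subrK.
Qed.
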